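(* Let $\Gamma$ be a connected finite simple graph. Then $C_3(L(\Gamma))\cong\Gamma$ if and only if all of the following hold: (1) every vertex of $\Gamma$ has degree $2$ or $3$; (2) every vertex of degree $2$ in $\Gamma$ is contained in a triangle; (3) every triangle in $\Gamma$ contains exactly one vertex of degree $2$; (4) distinct triangles in $\Gamma$ share no vertices.
   Context: $L(\Gamma)$ is the line graph of $\Gamma$: its vertices are the edges of $\Gamma$, two being adjacent iff they share an endpoint. For a graph $H$, $C_3(H)$ is the graph whose vertices are the triangles (cliques of order $3$) of $H$, two distinct triangles being adjacent iff they share at least one vertex. *)

From HB Require Import structures.
From mathcomp Require Import all_boot.
Set Implicit Arguments. Unset Strict Implicit. Unset Printing Implicit Defensive.

Record sgraph := SGraph {
  svert : finType;
  sadj : rel svert;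
  sadj_sym : symmetric sadj;
  sadj_irr : irreflexive sadj }.

Section IGraph.
Variables (T : finType) (P : pred {set T}).
Definition ivert := {A : {set T} | P A}.
Definition iadj : rel ivert := fun A B => (A != B) && (val A :&: val B != set0).
Lemma iadj_sym : symmetric iadj.
Proof. by move=> A B; rewrite /iadj eq_sym setIC. Qed.
Lemma iadj_irr : irreflexive iadj.
Proof. by move=> A; rewrite /iadj eqxx. Qed.
Definition igraph : sgraph := @SGraph ivert iadj iadj_sym iadj_irr.
End IGraph.

Definition is_edge (G : sgraph) (A : {set svert G}) : bool :=
  [exists x : svert G, exists y : svert G, @sadj G x y && (A == [set x; y])].

Definition is_triangle (G : sgraph) (A : {set svert G}) : bool :=
  (#|A| == 3) && [forall x in A, forall y in A, (x != y) ==> @sadj G x y].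

Definition line_graph (G : sgraph) : sgraph := igraph (@is_edge G).

Definition C3 (H : sgraph) : sgraph := igraph (@is_triangle H).

Definition deg (G : sgraph) (x : svert G) : nat := #|[set y | @sadj G x y]|.

Definition connected (G : sgraph) : Prop := forall x y : svert G, connect (@sadj G) x y.

Definition isomorphic (G1 G2 : sgraph) : Prop :=
  exists f : svert G1 -> svert G2, bijective f /\ forall x y, @sadj G2 (f x) (f y) = @sadj G1 x y.

(* If the four conditions hold, send a vertex of degree 3 to its star in L(G)
   and a vertex of degree 2 to the three edges of its triangle: these are all
   the triangles of L(G), and two of them meet iff the vertices are adjacent.
   Conversely, an isomorphism preserves degrees, and a vertex of maximum degree
   d > 3 is impossible: for d >= 5 a triangle of L(G) inside its star has at
   least 3(d-3) > d neighbours in C3(L(G)); for d = 4 the four triangles inside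
   its star form a K4 in C3(L(G)), hence in G, and the edge set of a triangle
   of a K4 has 6 neighbours.  Once d <= 3, every triangle of L(G) is a star or
   the edge set of a triangle, so |V| <= n3 + t, where n3 counts the vertices
   of degree 3 and t the triangles.  Comparing the degree sums of
   G and C3(L(G)) and double counting then gives
     6t + #(triangles sharing an edge)
       <= sum over y with deg y <= 2 of
          deg y + #(degree-3 neighbours of y) + 2 #(triangles at y)
       <= 6 (|V| - n3) <= 6t,
   and equality throughout yields the four conditions. *)

From mathcomp Require Import all_boot zify.
Set Implicit Arguments. Unset Strict Implicit. Unset Printing Implicit Defensive.

Section FinsetCounting.
Variable T : finType.
Implicit Types (A B U : {set T}) (a b c : T).

Lemma leq_card_in_sub (T' : finType) (f : T -> T') A (B : {set T'}) :
  {in A &, injective f} -> {in A, forall x, f x \in B} -> #|A| <= #|B|.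
Proof.
move=> f_inj fAB; rewrite -(card_in_imset f_inj); apply: subset_leq_card.
by apply/subsetP => _ /imsetP [x xA ->]; apply: fAB.
Qed.

Lemma leq_card_in_disjoint (T1 T2 : finType) (f1 : T1 -> T) (f2 : T2 -> T)
    (A1 : {set T1}) (A2 : {set T2}) B :
  {in A1 &, injective f1} -> {in A2 &, injective f2} ->
  {in A1 & A2, forall x1 x2, f1 x1 != f2 x2} ->
  {in A1, forall x1, f1 x1 \in B} -> {in A2, forall x2, f2 x2 \in B} ->
  #|A1| + #|A2| <= #|B|.
Proof.
move=> inj1 inj2 f12 fB1 fB2.
have disj : [disjoint f1 @: A1 & f2 @: A2].
  apply/pred0P => z /=; apply/negP => /andP [/imsetP [x1 x1A ->] /imsetP [x2 x2A]].
  by apply/eqP; apply: f12.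
rewrite -(card_in_imset inj1) -(card_in_imset inj2).
have /leqifP := leq_card_setU (f1 @: A1) (f2 @: A2); rewrite disj => /eqP <-.
apply: subset_leq_card.
by rewrite subUset; apply/andP; split; apply/subsetP => _ /imsetP [x xA ->];
  [exact: fB1 | exact: fB2].
Qed.

Lemma card_setD1 A a n : #|A| = n.+1 -> a \in A -> #|A :\ a| = n.
Proof. by move=> + aA; rewrite (cardsD1 a A) aA => -[]. Qed.

Lemma setD1_inj A a b : a \in A -> A :\ a = A :\ b -> a = b.
Proof.
move=> aA eqAab; apply/eqP; apply: contraT => ab.
by have := setD11 a A; rewrite eqAab !inE ab aA.
Qed.

Lemma cards3 a b c : a != b -> a != c -> b != c -> #|[set a; b; c]| = 3.
Proof.
by move=> ab ac bc; rewrite -setUA cardsU1 cards2 !inE (negbTE ab) (negbTE ac) bc.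
Qed.

Lemma exists_sub_card A k : k <= #|A| -> exists2 B : {set T}, B \subset A & #|B| = k.
Proof.
elim: k => [|k IHk] leA; first by exists set0; rewrite ?sub0set ?cards0.
have [B BA cardB] := IHk (ltnW leA).
have : 0 < #|A :\: B| by rewrite cardsD (setIidPr BA) cardB subn_gt0.
case/card_gt0P => a; rewrite inE => /andP [aB aA].
by exists (a |: B); rewrite ?subUset ?sub1set ?aA ?BA // cardsU1 aB cardB.
Qed.

Lemma setI_neq0_card A B U :
  A \subset U -> B \subset U -> #|U| < #|A| + #|B| -> A :&: B != set0.
Proof.
move=> AU BU; rewrite -card_gt0 -cardsUI.
have : #|A :|: B| <= #|U| by rewrite subset_leq_card // subUset AU BU.
lia.
Qed.

Lemma setD_exchange A a b : a \notin A -> b \in A ->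
  (a |: (A :\ b)) :\: A = [set a] /\ A :\: (a |: (A :\ b)) = [set b].
Proof.
move=> aA bA; have ab : a != b by apply: contraNneq aA => ->.
split; apply/setP => x; rewrite !inE.
  by case: (eqVneq x a) => [->|]; rewrite ?aA //; case: (x \in A); rewrite ?andbF.
case: (eqVneq x b) => [->|xb]; first by rewrite eq_sym (negbTE ab) bA.
by case: (eqVneq x a) => [->|]; rewrite ?(negbTE aA) ?andbF //; case: (x \in A).
Qed.

End FinsetCounting.

Section NatSums.
Variable I : finType.
Implicit Types (A B : {set I}) (F : I -> nat).

Lemma sum_setT F : \sum_(i in [set: I]) F i = \sum_i F i.
Proof. by apply: eq_bigl => i; rewrite in_setT. Qed.

Lemma sum_setC A F :
  \sum_i F i = \sum_(i in A) F i + \sum_(i in ~: A) F i.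
Proof.
rewrite (bigID (mem A)) /=; congr (_ + _).
by apply: eq_bigl => i; rewrite inE.
Qed.

Lemma leq_sum_subset A B F :
  A \subset B -> \sum_(i in A) F i <= \sum_(i in B) F i.
Proof. by move=> AB; rewrite [X in _ <= X](big_setID A) /= (setIidPr AB) leq_addr. Qed.

Lemma exchange_sum_card (J : finType) A (B : {set J}) (r : I -> J -> bool) :
  \sum_(i in A) #|[set j in B | r i j]| = \sum_(j in B) #|[set i in A | r i j]|.
Proof.
have card_sum (K : finType) (C : {set K}) (q : pred K) :
    #|[set k in C | q k]| = \sum_(k in C) q k.
  rewrite -sum1_card (eq_bigl (fun k => (k \in C) && q k)) => [|k]; last by rewrite inE.
  by rewrite big_mkcondr; apply: eq_bigr => k _; case: (q k).
under eq_bigr do rewrite card_sum.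
by rewrite exchange_big; apply: eq_bigr => j _; rewrite card_sum.
Qed.

Lemma sum_leq_const_eq A F c :
  {in A, forall i, F i <= c} -> #|A| * c <= \sum_(i in A) F i ->
  {in A, forall i, F i = c}.
Proof.
move=> Fc; rewrite -sum_nat_const => sumF.
have [leF /esym] := leqif_sum (fun i (iA : i \in A) => leqif_eq (Fc i iA)).
rewrite eqn_leq leF sumF => /forall_inP eqF i iA.
exact/eqP/eqF.
Qed.
End NatSums.

Lemma deg_igraph (T : finType) (P : pred {set T}) (A : ivert P) :
  @deg (igraph P) A = #|[set B | [&& P B, val A != B & val A :&: B != set0]]|.
Proof.
rewrite /deg -(card_imset _ val_inj); apply: eq_card => B; rewrite !inE.
apply/imsetP/and3P => [[C] | [PB AB meetAB]].
  by rewrite inE /= /iadj => /andP [AC meetAC] ->; split => //; apply: valP.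
by exists (Sub B PB : ivert P); rewrite // inE /= /iadj -(inj_eq val_inj) AB.
Qed.

Lemma deg_iso (G1 G2 : sgraph) (f : svert G1 -> svert G2) :
  bijective f -> (forall x y, @sadj G2 (f x) (f y) = @sadj G1 x y) ->
  forall x, deg (f x) = deg x.
Proof.
case=> g fK gK f_adj x; rewrite /deg -(card_imset _ (can_inj fK)).
apply: eq_card => y; rewrite inE; apply/idP/imsetP => [xy | [z]].
  by exists (g y); rewrite ?inE -?f_adj gK.
by rewrite inE -f_adj => + ->.
Qed.

Section Triangles.
Variable G : sgraph.
Local Notation V := (svert G).
Local Notation adj := (@sadj G).
Implicit Types (x y z w : V) (T : {set V}).

Lemma adj_neq x y : adj x y -> x != y.
Proof. by apply: contraTneq => ->; rewrite sadj_irr. Qed.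

Definition nbhd x := [set y | adj x y].

Lemma degE x : deg x = #|nbhd x|.
Proof. by []. Qed.

Lemma triangleP T :
  reflect (#|T| = 3 /\ {in T &, forall x y, x != y -> adj x y}) (is_triangle T).
Proof.
apply: (iffP andP) => [[/eqP cardT /forall_inP adjT] | [cardT adjT]].
  by split=> // x y xT yT; move/forall_inP: (adjT x xT) => /(_ y yT) /implyP.
split; first by apply/eqP.
by apply/forall_inP => x xT; apply/forall_inP => y yT; apply/implyP; apply: adjT.
Qed.

Lemma triangle3 x y z : adj x y -> adj y z -> adj x z -> is_triangle [set x; y; z].
Proof.
move=> xy yz xz; apply/triangleP; split; first by rewrite cards3 ?adj_neq.
move=> u w; rewrite !inE -!orbA => /or3P [] /eqP -> /or3P [] /eqP -> //;
  by rewrite ?eqxx // sadj_sym.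
Qed.

Lemma triangle_neq T x : is_triangle T -> exists2 w, w \in T & w != x.
Proof.
case/triangleP => cardT _.
have : 0 < #|T :\ x| by move: cardT; rewrite (cardsD1 x T); case: (x \in T) => /=; lia.
by case/card_gt0P => w; rewrite !inE => /andP [wx wT]; exists w.
Qed.

Lemma triangleD1_nbhd T x : is_triangle T -> x \in T -> T :\ x \subset nbhd x.
Proof.
case/triangleP => _ adjT xT; apply/subsetP => y; rewrite !inE => /andP [yx yT].
by apply: adjT; rewrite // eq_sym.
Qed.

End Triangles.

Section LineGraph.
Variable G : sgraph.
Local Notation V := (svert G).
Local Notation adj := (@sadj G).
Local Notation EV := (svert (line_graph G)).
Implicit Types (x y z v w : V) (e : EV) (T : {set V}) (A : {set EV}).

Lemma is_edge2 x y : adj x y -> is_edge [set x; y].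
Proof. by move=> xy; apply/existsP; exists x; apply/existsP; exists y; rewrite xy eqxx. Qed.

Definition edge_of x y (xy : adj x y) : EV := Sub [set x; y] (is_edge2 xy).

Lemma edgeP e : exists x y, adj x y /\ val e = [set x; y].
Proof. by case: e => A /= /existsP [x /existsP [y /andP [xy /eqP ->]]]; exists x, y. Qed.

Lemma card_edge e : #|val e| = 2.
Proof. by have [x [y [xy ->]]] := edgeP e; rewrite cards2 adj_neq. Qed.

Lemma edge_other e v : v \in val e -> exists w, adj v w /\ val e = [set v; w].
Proof.
have [x [y [xy ->]]] := edgeP e; rewrite !inE => /orP [] /eqP ->; first by exists y.
by exists x; rewrite sadj_sym setUC.
Qed.

Lemma edge_eq2 e x y : x != y -> x \in val e -> y \in val e ->
  val e = [set x; y] /\ adj x y.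
Proof.
move=> xy xe; have [w [xw ->]] := edge_other xe.
by rewrite !inE eq_sym (negbTE xy) => /eqP ->.
Qed.

Lemma card_edges_through2 A x y : x != y ->
  {in A, forall e, x \in val e /\ y \in val e} -> #|A| <= 1.
Proof.
move=> xy xyA; apply/card_le1_eqP => e1 e2 /xyA [x1 y1] /xyA [x2 y2].
by apply: val_inj; rewrite (edge_eq2 xy x1 y1).1 (edge_eq2 xy x2 y2).1.
Qed.

Definition star x := [set e : EV | x \in val e].

Lemma card_star_sub v (Y : {set V}) : Y \subset nbhd v ->
  #|[set e in star v | val e :\ v \subset Y]| = #|Y|.
Proof.
move=> Ynb; have vY y : y \in Y -> adj v y by move/(subsetP Ynb); rewrite inE.
have edgeD1 w : adj v w -> [set v; w] :\ v = [set w].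
  move=> vw; rewrite setDUl setDv set0U; apply/setDidPl.
  by rewrite disjoint_sym disjoints1 inE adj_neq.
have [Y0 | [y0 y0Y]] := set_0Vmem Y.
  rewrite Y0 cards0; apply/eqP; rewrite cards_eq0; apply/eqP/setP => e; rewrite !inE.
  apply/negP => /andP [ve]; have [w [vw ->]] := edge_other ve.
  by rewrite edgeD1 // sub1set inE.
pose mk y := insubd (edge_of (vY y0 y0Y)) [set v; y].
have val_mk y : y \in Y -> val (mk y) = [set v; y].
  by move=> yY; rewrite /mk insubdK //; exact: (is_edge2 (vY _ yY)).
have -> : [set e in star v | val e :\ v \subset Y] = mk @: Y.
  apply/setP => e; rewrite !inE; apply/andP/imsetP => [[ve] | [y yY ->]].
    have [w [vw ew]] := edge_other ve; rewrite ew edgeD1 // sub1set => wY.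
    by exists w => //; apply: val_inj; rewrite val_mk.
  by rewrite val_mk // edgeD1 ?vY // sub1set !inE eqxx.
rewrite card_in_imset // => y1 y2 y1Y y2Y /(congr1 val).
by rewrite !val_mk // => /(congr1 (fun B => B :\ v)); rewrite !edgeD1 ?vY //; apply: set1_inj.
Qed.

Lemma card_star x : #|star x| = deg x.
Proof.
rewrite degE -(@card_star_sub x (nbhd x)) //; apply: eq_card => e; rewrite !inE.
case xe: (x \in val e) => //=; symmetry; have [w [xw ->]] := edge_other xe.
by apply/subsetP => u; rewrite !inE => /andP [/negPf ux]; rewrite ux => /eqP ->.
Qed.

Definition ltri A := @is_triangle (line_graph G) A.

Lemma ltriP A :
  reflect (#|A| = 3 /\ {in A &, forall e1 e2, e1 != e2 -> val e1 :&: val e2 != set0})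
          (ltri A).
Proof.
apply: (iffP (@triangleP (line_graph G) A)) => -[cardA meetA]; split=> // e1 e2 e1A e2A e12.
  by have /andP [] := meetA e1 e2 e1A e2A e12.
by rewrite /= /iadj e12 meetA.
Qed.

Lemma ltri_sub_star A v : A \subset star v -> #|A| = 3 -> ltri A.
Proof.
move=> /subsetP Av cardA; apply/ltriP; split=> // e1 e2 /Av e1v /Av e2v _.
by rewrite !inE in e1v e2v; apply/set0Pn; exists v; rewrite inE e1v e2v.
Qed.

Lemma ltri_star x : deg x = 3 -> ltri (star x).
Proof. by rewrite -card_star; apply: ltri_sub_star. Qed.

Lemma star_inj x y : deg x = 3 -> star x = star y -> x = y.
Proof.
move=> degx eqxy; apply/eqP; apply: contraT => xy.
suff : #|star x| <= 1 by rewrite card_star degx.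
apply: (card_edges_through2 xy) => e ex; split; last rewrite eqxy in ex;
  by rewrite inE in ex.
Qed.

Definition tri_edges T := [set e : EV | val e \subset T].

Lemma is_edge_triangleD1 T w : is_triangle T -> w \in T -> is_edge (T :\ w).
Proof.
move=> /triangleP [cardT adjT] wT.
have /cards2P [x [y [xy Twxy]]] : #|T :\ w| == 2 by rewrite (card_setD1 cardT wT).
have /andP [xT yT] : (x \in T) && (y \in T).
  by have := subsetDl T [set w]; rewrite Twxy subUset !sub1set.
by rewrite Twxy; apply/is_edge2/adjT.
Qed.

Lemma tri_edgesP T e : is_triangle T -> e \in tri_edges T ->
  exists2 w, w \in T & val e = T :\ w.
Proof.
move=> /triangleP [cardT _]; rewrite inE => eT.
have /cards1P [w Tew] : #|T :\: val e| == 1 by rewrite cardsD (setIidPr eT) cardT card_edge.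
have /setDP [wT we] : w \in T :\: val e by rewrite Tew set11.
exists w => //; apply/eqP; rewrite eqEcard card_edge (card_setD1 cardT wT) leqnn andbT.
apply/subsetP => z ze; rewrite !inE (subsetP eT z ze) andbT.
by apply: contraNneq we => <-.
Qed.

Section TriangleEdges.
Variable T : {set V}.
Hypothesis triT : is_triangle T.

Let cardT : #|T| = 3. Proof. by case/triangleP: triT. Qed.

Lemma tri_edges_notin x : exists2 e, e \in tri_edges T & x \notin val e.
Proof.
have [w wT wx] : exists2 w, w \in T & x \notin T :\ w.
  case xT: (x \in T); first by exists x; rewrite ?setD11.
  by have [w wT _] := triangle_neq x triT; exists w; rewrite // inE xT andbF.
exists (Sub (T :\ w) (is_edge_triangleD1 triT wT)) => //.
by rewrite inE SubK subsetDl.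
Qed.

Lemma card_tri_edges : #|tri_edges T| = 3.
Proof.
have [w0 w0T] : exists w0, w0 \in T by apply/set0Pn; rewrite -card_gt0 cardT.
pose opp w := insubd (Sub (T :\ w0) (is_edge_triangleD1 triT w0T) : EV) (T :\ w).
have val_opp w : w \in T -> val (opp w) = T :\ w.
  by move=> wT; rewrite insubdK //; apply: is_edge_triangleD1.
have -> : tri_edges T = opp @: T.
  apply/setP => e; apply/idP/imsetP => [/(tri_edgesP triT) [w wT ew] | [w wT ->]].
    by exists w => //; apply: val_inj; rewrite val_opp.
  by rewrite inE val_opp // subsetDl.
rewrite card_in_imset // => w1 w2 w1T w2T /(congr1 val).
by rewrite !val_opp //; apply: setD1_inj.
Qed.

Lemma ltri_tri_edges : ltri (tri_edges T).
Proof.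
apply/ltriP; split=> [|e1 e2]; first exact: card_tri_edges.
rewrite !inE => e1T e2T _; rewrite -card_gt0.
have : #|val e1 :|: val e2| <= 3 by rewrite -cardT subset_leq_card // subUset e1T e2T.
by have := cardsUI (val e1) (val e2); rewrite !card_edge; lia.
Qed.

Lemma sub_star_neq_tri_edges A v : A \subset star v -> A != tri_edges T.
Proof.
move=> /subsetP Av; apply/eqP => defA; have [e eT ve] := tri_edges_notin v.
by move: (Av e); rewrite defA => /(_ eT); rewrite inE; apply/negP.
Qed.

End TriangleEdges.

Lemma tri_edges_inj T1 T2 : is_triangle T1 -> is_triangle T2 ->
  tri_edges T1 = tri_edges T2 -> T1 = T2.
Proof.
move=> tri1 tri2 eqT12; apply/eqP; rewrite eqEcard.
have [[card1 _] [card2 _]] := (triangleP _ tri1, triangleP _ tri2).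
rewrite card1 card2 leqnn andbT; apply/subsetP => v vT1.
have [w wT1 wv] := triangle_neq v tri1.
have : Sub (T1 :\ w) (is_edge_triangleD1 tri1 wT1) \in tri_edges T2.
  by rewrite -eqT12 inE SubK subsetDl.
by rewrite inE SubK => /subsetP; apply; rewrite !inE eq_sym wv.
Qed.

Lemma ltri_sub_star_eq A x : deg x <= 3 -> ltri A -> A \subset star x ->
  deg x = 3 /\ A = star x.
Proof.
move=> degx /ltriP [cardA _] Ax; have := subset_leq_card Ax.
rewrite cardA card_star => degx3; have deg3 : deg x = 3 by apply/eqP; rewrite eqn_leq degx.
by split=> //; apply/eqP; rewrite eqEcard Ax card_star deg3 cardA.
Qed.

Lemma set2_meet (T' : finType) (B : {set T'}) p q :
  [set p; q] :&: B != set0 -> p \notin B -> q \in B.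
Proof.
case/set0Pn => r; rewrite !inE => /andP [/orP [] /eqP -> // rB].
by rewrite rB.
Qed.

Lemma ltri_classify A : ltri A ->
  (exists v, A \subset star v) \/ (exists2 T, is_triangle T & A = tri_edges T).
Proof.
move=> ltriA; have /ltriP [cardA meetA] := ltriA.
have [e1 e1A] : exists e1, e1 \in A by apply/set0Pn; rewrite -card_gt0 cardA.
have [p [q [pq e1pq]]] := edgeP e1.
have [|/subsetPn [e2 e2A]] := boolP (A \subset star p); first by left; exists p.
have [|/subsetPn [e3 e3A]] := boolP (A \subset star q); first by left; exists q.
rewrite !inE => qe3 pe2; right.
have e12 : e1 != e2 by apply: contraNneq pe2 => <-; rewrite e1pq set21.
have e13 : e1 != e3 by apply: contraNneq qe3 => <-; rewrite e1pq set22.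
have e23 : e2 != e3 by apply: contraNneq qe3 => <-; rewrite (set2_meet _ pe2) // -e1pq meetA.
have qe2 : q \in val e2 by rewrite (set2_meet _ pe2) // -e1pq meetA.
have pe3 : p \in val e3 by rewrite (set2_meet (q := p) _ qe3) // setUC -e1pq meetA.
have /set0Pn [r] := meetA e2 e3 e2A e3A e23; rewrite inE => /andP [re2 re3].
have qr : q != r by apply: contraNneq qe3 => ->.
have pr : p != r by apply: contraNneq pe2 => ->.
have [[e2qr qr_adj] [e3pr pr_adj]] := (edge_eq2 qr qe2 re2, edge_eq2 pr pe3 re3).
have triT := triangle3 pq qr_adj pr_adj.
exists [set p; q; r] => //.
have card_e123 : #|[set e1; e2; e3]| = 3 by apply: cards3.
have <- : [set e1; e2; e3] = A.
  apply/eqP; rewrite eqEcard cardA card_e123 leqnn andbT.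
  by apply/subsetP => e; rewrite !inE -!orbA => /or3P [] /eqP ->.
apply/eqP; rewrite eqEcard card_tri_edges // card_e123 leqnn andbT.
apply/subsetP => e; rewrite !inE -!orbA => /or3P [] /eqP ->;
  rewrite ?e1pq ?e2qr ?e3pr; apply/subsetP => z; rewrite !inE => /orP [] /eqP ->;
  by rewrite eqxx ?orbT.
Qed.

Lemma meet_stars x y : x != y -> (star x :&: star y != set0) = adj x y.
Proof.
move=> xy; apply/idP/idP => [/set0Pn [e] | xy_adj].
  by rewrite !inE => /andP [xe ye]; exact: (edge_eq2 xy xe ye).2.
by apply/set0Pn; exists (edge_of xy_adj); rewrite !inE /= !eqxx orbT.
Qed.

Lemma meet_star_tri_edges x T : is_triangle T ->
  (star x :&: tri_edges T != set0) = (x \in T).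
Proof.
move=> triT; apply/idP/idP => [/set0Pn [e] | xT].
  by rewrite !inE => /andP [xe /subsetP]; apply.
have [w wT wx] := triangle_neq x triT.
apply/set0Pn; exists (Sub (T :\ w) (is_edge_triangleD1 triT wT)).
by rewrite !inE /= subsetDl eq_sym wx xT.
Qed.

Lemma meet_tri_edges T1 T2 :
  tri_edges T1 :&: tri_edges T2 != set0 -> T1 :&: T2 != set0.
Proof.
case/set0Pn => e; rewrite !inE => /andP [e1 e2].
have /card_gt0P [z ze] : 0 < #|val e| by rewrite card_edge.
by apply/set0Pn; exists z; rewrite inE (subsetP e1 z ze) (subsetP e2 z ze).
Qed.

Definition ltri_nbrs A := [set B | [&& ltri B, A != B & A :&: B != set0]].

Lemma deg_C3_line_graph (S : svert (C3 (line_graph G))) : deg S = #|ltri_nbrs (val S)|.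
Proof. exact: deg_igraph. Qed.

Lemma meet_tri_edges2 T1 T2 y z : is_triangle T1 -> y != z ->
  y \in T1 :&: T2 -> z \in T1 :&: T2 -> tri_edges T1 :&: tri_edges T2 != set0.
Proof.
move=> /triangleP [_ adjT1] yz; rewrite !inE => /andP [yT1 yT2] /andP [zT1 zT2].
apply/set0Pn; exists (edge_of (adjT1 y z yT1 zT1 yz)).
by rewrite !inE /= !subUset !sub1set yT1 yT2 zT1 zT2.
Qed.

Lemma star_ltri_nbrs m (S : {set EV}) : S \subset star m -> #|S| = 3 ->
  3 * (deg m - 3) <= #|ltri_nbrs S|.
Proof.
move=> Sm cardS.
pose swap (p : EV * EV) := p.1 |: (S :\ p.2).
have cardX : #|setX (star m :\: S) S| = (deg m - 3) * 3.
  by rewrite cardsX cardsD (setIidPr Sm) card_star cardS.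
rewrite mulnC -cardX; apply: (@leq_card_in_sub _ _ swap) => [[g1 y1] [g2 y2] | [g y]].
  rewrite !inE /= => /andP [/andP [g1S _] y1S] /andP [/andP [g2S _] y2S] eq_swap.
  have [[g1_out y1_out] [g2_out y2_out]] := (setD_exchange g1S y1S, setD_exchange g2S y2S).
  rewrite /swap /= in eq_swap.
  have /set1_inj -> : [set g1] = [set g2] by rewrite -g1_out -g2_out eq_swap.
  by have /set1_inj -> : [set y1] = [set y2] by rewrite -y1_out -y2_out eq_swap.
rewrite !inE /= => /andP [/andP [gS gm] yS].
have cardSy : #|S :\ y| = 2 by apply: card_setD1.
have gSy : g \notin S :\ y by rewrite inE (negbTE gS) andbF.
rewrite /swap /= (@ltri_sub_star _ m) ?cardsU1 ?gSy ?cardSy //; last first.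
  by rewrite subUset sub1set inE gm (subset_trans (subsetDl _ _) Sm).
apply/and3P; split=> //; first by apply: contraNneq gS => ->; rewrite setU11.
have /card_gt0P [z zSy] : 0 < #|S :\ y| by rewrite cardSy.
apply/set0Pn; exists z; rewrite inE setU1r // andbT.
by move: zSy; rewrite inE => /andP [].
Qed.

Section Clique4.
Variable K : {set V}.
Hypothesis cardK : #|K| = 4.
Hypothesis adjK : {in K &, forall a b, a != b -> adj a b}.

Lemma triangle_K4D1 u : u \in K -> is_triangle (K :\ u).
Proof.
move=> uK; apply/triangleP; split; first exact: card_setD1.
by move=> a b; rewrite !inE => /andP [_ aK] /andP [_ bK]; apply: adjK.
Qed.

Definition clique_star v := [set e in star v | val e :\ v \subset K :\ v].

Lemma clique_star_sub v : clique_star v \subset star v.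
Proof. by apply/subsetP => e; rewrite inE => /andP []. Qed.

Lemma card_clique_star v : v \in K -> #|clique_star v| = 3.
Proof.
move=> vK; rewrite card_star_sub ?(card_setD1 cardK) //; apply/subsetP => z.
by rewrite !inE => /andP [zv zK]; apply: adjK; rewrite // eq_sym.
Qed.

Lemma clique_star_inj u1 u2 : u1 \in K -> clique_star u1 = clique_star u2 -> u1 = u2.
Proof.
move=> u1K eq12; apply/eqP; apply: contraT => u12.
suff : #|clique_star u1| <= 1 by rewrite card_clique_star.
apply: (card_edges_through2 u12) => e e1; split; last rewrite eq12 in e1;
  by move: e1; rewrite !inE => /andP [].
Qed.

Lemma K4D1_ltri_nbrs w u : w \in K -> u \in K :\ w ->
  tri_edges (K :\ u) \in ltri_nbrs (tri_edges (K :\ w)).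
Proof.
move=> wK; rewrite !inE => /andP [uw uK].
rewrite ltri_tri_edges ?triangle_K4D1 //=; apply/andP; split.
  apply: contra_neq uw => /tri_edges_inj eqK.
  by apply/esym/(setD1_inj wK)/eqK; apply: triangle_K4D1.
have /cards2P [y [z [yz Kwu]]] : #|K :\ w :\ u| == 2.
  by rewrite (card_setD1 (card_setD1 cardK wK)) // !inE uw uK.
have : (y \in K :\ w :\ u) && (z \in K :\ w :\ u) by rewrite Kwu !inE !eqxx orbT.
rewrite !inE => /andP [/and3P [yu yw yK] /and3P [zu zw zK]].
by apply: (meet_tri_edges2 (triangle_K4D1 wK) yz); rewrite !inE ?yu ?yw ?yK ?zu ?zw ?zK.
Qed.

Lemma clique_star_ltri_nbrs w u : w \in K -> u \in K :\ w ->
  clique_star u \in ltri_nbrs (tri_edges (K :\ w)).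
Proof.
move=> wK uKw; have triT := triangle_K4D1 wK; move: (uKw); rewrite !inE => /andP [uw uK].
rewrite (ltri_sub_star (clique_star_sub u)) ?card_clique_star //=; apply/andP; split.
  by rewrite eq_sym (sub_star_neq_tri_edges triT (clique_star_sub u)).
have [z zT zu] := triangle_neq u triT; move: (zT); rewrite !inE => /andP [zw zK].
have uz : u != z by rewrite eq_sym.
apply/set0Pn; exists (edge_of (adjK uK zK uz)).
rewrite !inE /= !subUset !sub1set !inE uw uK zw zK /= eqxx.
by apply/subsetP => v; rewrite !inE => /andP [vu /orP [] /eqP vz];
  rewrite ?vz ?eqxx ?zu ?zK in vu *.
Qed.

Lemma K4_ltri_nbrs : exists2 A, ltri A & 6 <= #|ltri_nbrs A|.
Proof.
have [w wK] : exists w, w \in K by apply/set0Pn; rewrite -card_gt0 cardK.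
exists (tri_edges (K :\ w)); first exact/ltri_tri_edges/triangle_K4D1.
pose nbr (p : V * bool) := if p.2 then tri_edges (K :\ p.1) else clique_star p.1.
have <- : #|setX (K :\ w) [set: bool]| = 6.
  by rewrite cardsX cardsT card_bool (card_setD1 cardK wK).
apply: (@leq_card_in_sub _ _ nbr) => [[u1 b1] [u2 b2] | [u b]].
  rewrite !inE /= => /andP [/andP [_ u1K] _] /andP [/andP [_ u2K] _].
  have [tri1 tri2] := (triangle_K4D1 u1K, triangle_K4D1 u2K).
  case: b1; case: b2; rewrite /nbr /= => eq12.
  - by rewrite (setD1_inj u1K (tri_edges_inj tri1 tri2 eq12)).
  - by have := sub_star_neq_tri_edges tri1 (clique_star_sub u2); rewrite -eq12 eqxx.
  - by have := sub_star_neq_tri_edges tri2 (clique_star_sub u1); rewrite eq12 eqxx.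
  - by rewrite (clique_star_inj u1K eq12).
rewrite in_setX in_setT andbT => uKw.
by case: b; [apply: K4D1_ltri_nbrs | apply: clique_star_ltri_nbrs].
Qed.

End Clique4.

End LineGraph.

Lemma isomorphic_sym (G1 G2 : sgraph) : isomorphic G1 G2 -> isomorphic G2 G1.
Proof.
case=> f [[g fK gK] f_adj]; exists g; split; first by exists f.
by move=> x y; rewrite -f_adj !gK.
Qed.

Section Sufficiency.
Variable G : sgraph.
Local Notation V := (svert G).
Local Notation adj := (@sadj G).
Local Notation EV := (svert (line_graph G)).
Local Notation CV := (svert (C3 (line_graph G))).
Implicit Types (x y : V) (T : {set V}).

Hypothesis deg23 : forall x, deg x = 2 \/ deg x = 3.
Hypothesis deg2_triangle : forall x, deg x = 2 -> exists T, is_triangle T /\ x \in T.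
Hypothesis triangle_deg2 : forall T, is_triangle T -> #|[set x in T | deg x == 2]| = 1.
Hypothesis triangle_disjoint : forall T1 T2, is_triangle T1 -> is_triangle T2 -> T1 != T2 ->
  T1 :&: T2 = set0.

Definition tri_of x := odflt set0 [pick T | is_triangle T && (x \in T)].

Lemma tri_ofP x : deg x = 2 -> is_triangle (tri_of x) /\ x \in tri_of x.
Proof.
move=> /deg2_triangle [T [triT xT]]; rewrite /tri_of.
by case: pickP => [T' /andP [] | /(_ T)] //; rewrite triT xT.
Qed.

Lemma tri_of_eq x T : is_triangle T -> x \in T -> deg x = 2 -> tri_of x = T.
Proof.
move=> triT xT /tri_ofP [tri_x x_tri]; apply/eqP; apply: contraT => neqT.
by have /setP /(_ x) := triangle_disjoint tri_x triT neqT; rewrite !inE x_tri xT.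
Qed.

Lemma triangle_deg2_uniq T y z : is_triangle T -> y \in T -> z \in T ->
  deg y = 2 -> deg z = 2 -> y = z.
Proof.
move=> triT yT zT degy degz; have /eqP /cards1P [w defT2] := triangle_deg2 triT.
have : (y \in [set x in T | deg x == 2]) && (z \in [set x in T | deg x == 2]).
  by rewrite !inE yT zT degy degz.
by rewrite defT2 !inE => /andP [/eqP -> /eqP ->].
Qed.

Lemma nbhd_deg2 y : deg y = 2 -> nbhd y = tri_of y :\ y.
Proof.
move=> degy; have [triT yT] := tri_ofP degy; have [cardT _] := triangleP _ triT.
apply/esym/eqP; rewrite eqEcard triangleD1_nbhd //.
by rewrite -degE degy (card_setD1 cardT yT).
Qed.

Definition ltri_of x : {set EV} :=
  if deg x == 3 then star x else tri_edges (tri_of x).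

Lemma ltri_ltri_of x : ltri (ltri_of x).
Proof.
rewrite /ltri_of; case: ifP => [/eqP | deg_n3]; first exact: ltri_star.
apply: ltri_tri_edges; case: (deg23 x) => degx; first by case: (tri_ofP degx).
by rewrite degx in deg_n3.
Qed.

Lemma ltri_of_inj : injective ltri_of.
Proof.
move=> x y; rewrite /ltri_of.
case: (deg23 x) => degx; case: (deg23 y) => degy; rewrite degx degy /=.
- have [[trix xT] [triy yT]] := (tri_ofP degx, tri_ofP degy).
  move/(tri_edges_inj trix triy) => eqT.
  by apply: (triangle_deg2_uniq trix) => //; rewrite eqT.
- move=> eq_xy; have := sub_star_neq_tri_edges (tri_ofP degx).1 (subxx (star y)).
  by rewrite eq_xy eqxx.
- move=> eq_xy; have := sub_star_neq_tri_edges (tri_ofP degy).1 (subxx (star x)).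
  by rewrite eq_xy eqxx.
- exact: star_inj.
Qed.

Lemma adj_deg2 x y : deg x = 2 -> x != y -> adj x y = (y \in tri_of x).
Proof. by move=> /nbhd_deg2 /setP /(_ y) + xy; rewrite !inE eq_sym xy. Qed.

Lemma meet_ltri_of x y : x != y -> (ltri_of x :&: ltri_of y != set0) = adj x y.
Proof.
move=> xy; rewrite /ltri_of.
case: (deg23 x) => degx; case: (deg23 y) => degy; rewrite degx degy /=.
- have [[trix xT] [triy yT]] := (tri_ofP degx, tri_ofP degy).
  have yTx : y \notin tri_of x.
    by apply: contra xy => yTx; apply/eqP; apply: (triangle_deg2_uniq trix).
  rewrite adj_deg2 // (negPf yTx); apply/negbTE/negP => /meet_tri_edges meetT.
  suff eqT : tri_of x = tri_of y by rewrite eqT yT in yTx.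
  by apply/eqP; apply: contraTT meetT => neqT; rewrite negbK triangle_disjoint.
- by rewrite setIC meet_star_tri_edges ?adj_deg2 //; case: (tri_ofP degx).
- by rewrite meet_star_tri_edges ?(tri_ofP degy).1 // sadj_sym adj_deg2 // eq_sym.
- exact: meet_stars.
Qed.

Lemma ltri_of_surj A : ltri A -> exists x, ltri_of x = A.
Proof.
have deg_le3 (v : V) : deg v <= 3 by case: (deg23 v) => ->.
move=> ltriA; case: (ltri_classify ltriA) => [[v Av] | [T triT ->]].
  have [degv ->] := ltri_sub_star_eq (deg_le3 v) ltriA Av.
  by exists v; rewrite /ltri_of degv.
have /eqP /cards1P [y defT2] := triangle_deg2 triT.
have : y \in [set x in T | deg x == 2] by rewrite defT2 set11.
rewrite inE => /andP [yT /eqP degy].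
by exists y; rewrite /ltri_of degy /= (tri_of_eq triT yT degy).
Qed.

Lemma C3_line_graph_iso : isomorphic (C3 (line_graph G)) G.
Proof.
pose F x : CV := Sub (ltri_of x) (ltri_ltri_of x).
have F_inj : injective F by move=> x y /(congr1 val) /ltri_of_inj.
have F_bij : bijective F.
  apply: (inj_card_bij F_inj); rewrite -(card_codom F_inj).
  apply/subset_leq_card/subsetP => S _; have [x eqS] := ltri_of_surj (valP S).
  by apply/codomP; exists x; apply: val_inj.
apply: isomorphic_sym; exists F; split=> // x y.
case: (eqVneq x y) => [<- | xy]; first by rewrite !sadj_irr.
by rewrite /= /iadj (inj_eq F_inj) xy meet_ltri_of.
Qed.

End Sufficiency.

Section TriangleCounts.
Variable G : sgraph.
Local Notation V := (svert G).
Local Notation adj := (@sadj G).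
Implicit Types (x y : V) (T : {set V}).

Definition deg3 := [set x : V | deg x == 3].
Definition triangles := [set T : {set V} | is_triangle T].
Definition ntri x := #|[set T in triangles | x \in T]|.
Definition ndeg3 x := #|[set y in deg3 | adj x y]|.
Definition nshare T :=
  #|[set T' in triangles | (T' != T) && (tri_edges T :&: tri_edges T' != set0)]|.

Lemma star_ltri_nbrs_ge x : x \in deg3 -> ndeg3 x + ntri x <= #|ltri_nbrs (star x)|.
Proof.
rewrite inE => /eqP degx.
apply: (@leq_card_in_disjoint _ _ _ (@star G) (@tri_edges G)).
- by move=> y1 y2; rewrite !inE => /andP [/eqP deg1 _] _; apply: star_inj.
- by move=> T1 T2; rewrite !inE => /andP [tri1 _] /andP [tri2 _]; apply: tri_edges_inj.
- move=> y T _; rewrite !inE => /andP [triT _].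
  by have := sub_star_neq_tri_edges triT (subxx (star y)).
- move=> y; rewrite !inE => /andP [/eqP degy xy].
  rewrite ltri_star //= meet_stars ?adj_neq // xy andbT.
  by apply: contra_neq (adj_neq xy) => /star_inj ->.
- move=> T; rewrite !inE => /andP [triT xT].
  rewrite ltri_tri_edges //= meet_star_tri_edges // xT andbT.
  by have := sub_star_neq_tri_edges triT (subxx (star x)).
Qed.

Lemma tri_edges_ltri_nbrs_ge T : T \in triangles ->
  #|T :&: deg3| + nshare T <= #|ltri_nbrs (tri_edges T)|.
Proof.
rewrite inE => triT.
apply: (@leq_card_in_disjoint _ _ _ (@star G) (@tri_edges G)).
- by move=> y1 y2; rewrite !inE => /andP [_ /eqP deg1] _; apply: star_inj.
- by move=> T1 T2; rewrite !inE => /andP [tri1 _] /andP [tri2 _]; apply: tri_edges_inj.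
- move=> y T'; rewrite !inE => _ /andP [triT' _].
  by have := sub_star_neq_tri_edges triT' (subxx (star y)).
- move=> y; rewrite !inE => /andP [yT /eqP degy].
  rewrite ltri_star //= setIC meet_star_tri_edges // yT andbT eq_sym.
  by have := sub_star_neq_tri_edges triT (subxx (star y)).
- move=> T'; rewrite !inE => /and3P [triT' neqT meetT].
  rewrite ltri_tri_edges //= meetT andbT.
  by apply: contra_neq neqT => /(tri_edges_inj triT triT') ->.
Qed.

Lemma sum_card_triangle_setI (P : {set V}) :
  \sum_(T in triangles) #|T :&: P| = \sum_(x in P) ntri x.
Proof.
rewrite /ntri -(exchange_sum_card _ _ (fun T x => x \in T)).
by apply: eq_bigr => T _; apply: eq_card => x; rewrite !inE andbC.
Qed.

Lemma sum_ndeg3 : \sum_y ndeg3 y = \sum_(x in deg3) deg x.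
Proof.
rewrite -sum_setT /ndeg3 (exchange_sum_card _ _ (fun y x => adj y x)).
by apply: eq_bigr => x _; apply: eq_card => y; rewrite !inE sadj_sym.
Qed.

Lemma ntri_le1 y : deg y <= 2 -> ntri y <= 1.
Proof.
move=> degy.
have defT T : is_triangle T -> y \in T -> T = y |: nbhd y.
  move=> triT yT; have [cardT _] := triangleP _ triT.
  suff <- : T :\ y = nbhd y by rewrite setD1K.
  apply/eqP; rewrite eqEcard triangleD1_nbhd // (card_setD1 cardT yT) -degE.
  by rewrite degy.
apply/card_le1_eqP => T1 T2; rewrite !inE => /andP [tri1 y1] /andP [tri2 y2].
by rewrite (defT _ tri1 y1) (defT _ tri2 y2).
Qed.

Lemma ndeg3_le y : ndeg3 y <= deg y.
Proof. by rewrite degE subset_leq_card //; apply/subsetP => z; rewrite !inE => /andP []. Qed.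

Definition weight y := deg y + ndeg3 y + 2 * ntri y.

Lemma weight_le6 y : deg y <= 2 -> weight y <= 6.
Proof. by move=> degy; have := ntri_le1 degy; have := ndeg3_le y; rewrite /weight; lia. Qed.

End TriangleCounts.

Section Necessity.
Variable G : sgraph.
Local Notation V := (svert G).
Local Notation adj := (@sadj G).
Local Notation EV := (svert (line_graph G)).
Local Notation CV := (svert (C3 (line_graph G))).
Implicit Types (x y m : V) (T : {set V}) (A : {set EV}).

Variable f : CV -> V.
Hypothesis f_bij : bijective f.
Hypothesis f_adj : forall S U, adj (f S) (f U) = @sadj (C3 (line_graph G)) S U.

Lemma ltri_nbrs_deg A : ltri A -> exists x, deg x = #|ltri_nbrs A|.
Proof.
by move=> ltriA; exists (f (Sub A ltriA)); rewrite (deg_iso f_bij f_adj) deg_C3_line_graph.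
Qed.

Lemma deg4_K4 m : deg m = 4 ->
  exists2 K : {set V}, #|K| = 4 & {in K &, forall a b, a != b -> adj a b}.
Proof.
move=> degm; have cardR : #|star m| = 4 by rewrite card_star.
have ltriD1 e : e \in star m -> ltri (star m :\ e).
  by move=> em; apply: (ltri_sub_star (subsetDl _ _)); apply: card_setD1 cardR em.
have [e0 e0m] : exists e0, e0 \in star m by apply/set0Pn; rewrite -card_gt0 cardR.
pose psi e : CV := insubd (Sub (star m :\ e0) (ltriD1 e0 e0m)) (star m :\ e).
have val_psi e : e \in star m -> val (psi e) = star m :\ e.
  by move=> em; rewrite insubdK //; exact: (ltriD1 e em).
have f_psi_inj : {in star m &, injective (f \o psi)}.
  move=> e1 e2 e1m e2m /(bij_inj f_bij) /(congr1 val).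
  by rewrite !val_psi //; apply: setD1_inj.
exists [set (f \o psi) e | e in star m]; first by rewrite card_in_imset.
move=> _ _ /imsetP [e1 e1m ->] /imsetP [e2 e2m ->] ne.
rewrite f_adj /= /iadj -(inj_eq val_inj) !val_psi //; apply/andP; split.
  by apply: contra_neq ne => /(setD1_inj e1m) ->.
by rewrite (@setI_neq0_card _ _ _ (star m)) ?subsetDl // !(card_setD1 cardR) ?cardR.
Qed.

Lemma max_deg_le3 x : deg x <= 3.
Proof.
rewrite leqNgt; apply/negP => degx.
have [m _ max_m] := @arg_maxnP _ x xpredT (fun y => deg y) isT.
have {degx} degm : 3 < deg m := leq_trans degx (max_m x isT).
have nbrs_le A : ltri A -> #|ltri_nbrs A| <= deg m.
  by move=> /ltri_nbrs_deg [y <-]; apply: max_m.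
case: (ltngtP (deg m) 4) => [| degm_gt4 | degm4]; first lia.
  have [S Sm cardS] : exists2 S : {set EV}, S \subset star m & #|S| = 3.
    by apply: exists_sub_card; rewrite card_star; lia.
  have := star_ltri_nbrs Sm cardS; have := nbrs_le S (ltri_sub_star Sm cardS).
  by move=> *; lia.
have [K cardK adjK] := deg4_K4 degm4; have [A ltriA nbrsA] := K4_ltri_nbrs cardK adjK.
by have := nbrs_le A ltriA; rewrite degm4; lia.
Qed.

Lemma card_le_deg3_triangles : #|V| <= #|deg3 G| + #|triangles G|.
Proof.
rewrite -(bij_eq_card f_bij) -cardsT.
apply: leq_trans (leq_add (leq_imset_card (@star G) _) (leq_imset_card (@tri_edges G) _)).
apply: leq_trans (leq_card_setU _ _).
apply: (@leq_card_in_sub _ _ val) => [S1 S2 _ _ /val_inj // | S _].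
have [[v Av] | [T triT ->]] := ltri_classify (valP S); rewrite inE; apply/orP.
  have [degv ->] := ltri_sub_star_eq (max_deg_le3 v) (valP S) Av.
  by left; apply/imsetP; exists v; rewrite ?inE ?degv.
by right; apply/imsetP; exists T; rewrite ?inE.
Qed.

(* The degree sum of G is that of C3(L(G)), among whose vertices are the stars
   of degree-3 vertices and the edge sets of triangles. *)
Lemma sum_deg_ge :
  \sum_(x in deg3 G) (ndeg3 x + ntri x) +
  \sum_(T in triangles G) (#|T :&: deg3 G| + nshare T) <= \sum_(x : V) deg x.
Proof.
pose X := @star G @: deg3 G; pose Y := @tri_edges G @: triangles G.
have -> : \sum_(x : V) deg x = \sum_(A in [set val S | S in [set: CV]]) #|ltri_nbrs A|.
  rewrite (reindex f) /=; last exact: onW_bij.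
  rewrite big_imset /=; last by move=> ? ? _ _; apply: val_inj.
  by apply: eq_big => [S | S _]; rewrite ?inE // (deg_iso f_bij f_adj) deg_C3_line_graph.
have XY_ltri : X :|: Y \subset [set val S | S in [set: CV]].
  apply/subsetP => A; rewrite inE => /orP [] /imsetP [z]; rewrite inE => zP ->.
    by apply/imsetP; exists (Sub (star z) (ltri_star (eqP zP))).
  by apply/imsetP; exists (Sub (tri_edges z) (ltri_tri_edges zP)).
have disjXY : [disjoint X & Y].
  apply/pred0P => A /=; apply/negP => /andP [/imsetP [x x3 ->] /imsetP [T triT]].
  rewrite inE in triT; apply/eqP.
  by have := sub_star_neq_tri_edges triT (subxx (star x)).
apply: leq_trans (leq_sum_subset _ XY_ltri).
rewrite (eq_bigl [predU X & Y]) => [|A]; last by rewrite !inE.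
rewrite bigU //= !big_imset => [|T1 T2|x y]; rewrite ?inE.
- apply: leq_add; apply: leq_sum => ? ?;
    [exact: star_ltri_nbrs_ge | exact: tri_edges_ltri_nbrs_ge].
- exact: tri_edges_inj.
- by move=> /eqP deg3x _; apply: star_inj.
Qed.

Lemma low_weight_ge :
  6 * #|triangles G| + \sum_(T in triangles G) nshare T <= \sum_(y in ~: deg3 G) weight y.
Proof.
have deg3_sum : \sum_(x in deg3 G) deg x = #|deg3 G| * 3.
  by rewrite -sum_nat_const; apply: eq_bigr => x; rewrite inE => /eqP.
have ntri_sum : \sum_(x : V) ntri x = #|triangles G| * 3.
  rewrite -sum_setT -sum_card_triangle_setI -sum_nat_const.
  by apply: eq_bigr => T; rewrite inE setIT => /triangleP [].
have count3 := sum_card_triangle_setI (deg3 G).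
have ndeg3_sum := sum_ndeg3 G.
have deg_sum := sum_deg_ge; rewrite !big_split /= in deg_sum.
rewrite (sum_setC (deg3 G) (@ntri G)) in ntri_sum.
rewrite (sum_setC (deg3 G) (@ndeg3 G)) in ndeg3_sum.
rewrite (sum_setC (deg3 G) (@deg G)) in deg_sum.
rewrite /weight 2!big_split -big_distrr /=.
set t3 := \sum_(x in deg3 G) ntri x in count3 ntri_sum deg_sum.
set a3 := \sum_(x in deg3 G) ndeg3 x in ndeg3_sum deg_sum.
set d3 := \sum_(x in deg3 G) deg x in deg3_sum ndeg3_sum deg_sum.
set X3 := \sum_(T in triangles G) #|T :&: deg3 G| in count3 deg_sum.
set tL := \sum_(y in ~: deg3 G) ntri y in ntri_sum *.
set aL := \sum_(y in ~: deg3 G) ndeg3 y in ndeg3_sum *.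
set dL := \sum_(y in ~: deg3 G) deg y in deg_sum *.
set S := \sum_(T in triangles G) nshare T in deg_sum *.
set nt := #|triangles G| in ntri_sum *.
clearbody t3 a3 d3 X3 tL aL dL S nt; lia.
Qed.

Lemma low_deg_le2 y : y \in ~: deg3 G -> deg y <= 2.
Proof. by rewrite !inE => /eqP deg_n3; have := max_deg_le3 y; lia. Qed.

Lemma low_vertex_counts :
  [/\ {in triangles G, forall T, nshare T = 0}, #|~: deg3 G| = #|triangles G|
    & {in ~: deg3 G, forall y, weight y = 6}].
Proof.
have weight_sum : \sum_(y in ~: deg3 G) weight y <= #|~: deg3 G| * 6.
  by rewrite -sum_nat_const; apply: leq_sum => y /low_deg_le2 /weight_le6.
have card_low : #|~: deg3 G| <= #|triangles G|.
  by have := card_le_deg3_triangles; have := cardsC (deg3 G); lia.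
have weight_ge := low_weight_ge.
set W := \sum_(y in ~: deg3 G) weight y in weight_sum weight_ge.
set S := \sum_(T in triangles G) nshare T in weight_ge.
set nL := #|~: deg3 G| in weight_sum card_low *.
set nt := #|triangles G| in card_low weight_ge *.
have [S0 [nLt W6]] : S = 0 /\ nL = nt /\ nL * 6 <= W by clearbody W S nL nt; lia.
split=> //; last by apply: sum_leq_const_eq W6 => y /low_deg_le2 /weight_le6.
by move/eqP: S0; rewrite sum_nat_eq0 => /forall_inP nshare0 T /nshare0 /eqP.
Qed.

Lemma low_vertexP y : y \in ~: deg3 G -> [/\ deg y = 2, ndeg3 y = 2 & ntri y = 1].
Proof.
move=> yL; have [_ _ /(_ y yL)] := low_vertex_counts; rewrite /weight.
have := low_deg_le2 yL; have := ndeg3_le y; have := ntri_le1 (low_deg_le2 yL).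
by move=> *; split; lia.
Qed.

Lemma low_deg2 x : (x \in ~: deg3 G) = (deg x == 2).
Proof.
apply/idP/idP => [/low_vertexP [-> _ _] // | /eqP deg2].
by rewrite !inE deg2.
Qed.

Lemma deg2_or_3 x : deg x = 2 \/ deg x = 3.
Proof.
case: (boolP (x \in deg3 G)) => [| xL]; first by rewrite inE => /eqP; right.
by left; apply/eqP; rewrite -low_deg2 inE.
Qed.

Lemma deg2_triangle x : deg x = 2 -> exists T, is_triangle T /\ x \in T.
Proof.
move/eqP; rewrite -low_deg2 => /low_vertexP [_ _ ntri1].
have /card_gt0P [T] : 0 < ntri x by rewrite ntri1.
by rewrite !inE => /andP [triT xT]; exists T.
Qed.

Lemma triangle_low_le1 T : T \in triangles G -> #|T :&: ~: deg3 G| <= 1.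
Proof.
rewrite inE => /triangleP [_ adjT]; apply/card_le1_eqP => y z.
rewrite !in_setI => /andP [yT yL] /andP [zT zL]; apply/eqP; apply: contraT => yz.
have [degy ndeg3y _] := low_vertexP yL.
have nbhd_deg3 : [set x in deg3 G | adj y x] = nbhd y.
  apply/eqP; rewrite eqEcard -degE degy -/(ndeg3 y) ndeg3y leqnn andbT.
  by apply/subsetP => u; rewrite !inE => /andP [].
have : z \in nbhd y by rewrite inE adjT // eq_sym.
by rewrite -nbhd_deg3 inE; move: zL; rewrite inE => /negPf ->.
Qed.

Lemma triangle_deg2_card T : is_triangle T -> #|[set x in T | deg x == 2]| = 1.
Proof.
move=> triT; have [_ card_low _] := low_vertex_counts.
have sum_low : #|triangles G| * 1 <= \sum_(T in triangles G) #|T :&: ~: deg3 G|.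
  rewrite sum_card_triangle_setI muln1 -card_low -sum1_card.
  by apply: leq_sum => y /low_vertexP [_ _ ->].
rewrite -[RHS](sum_leq_const_eq triangle_low_le1 sum_low (_ : T \in triangles G)) ?inE //.
by apply: eq_card => x; rewrite in_setI low_deg2 !inE.
Qed.

Lemma triangles_disjoint T1 T2 : is_triangle T1 -> is_triangle T2 -> T1 != T2 ->
  T1 :&: T2 = set0.
Proof.
move=> tri1 tri2 T12; apply/eqP; apply: contraT => /set0Pn [x].
rewrite inE => /andP [xT1 xT2].
have [[card1 _] [card2 _]] := (triangleP _ tri1, triangleP _ tri2).
have /set0Pn [z] : (T1 :\ x) :&: (T2 :\ x) != set0.
  apply: (setI_neq0_card (triangleD1_nbhd tri1 xT1) (triangleD1_nbhd tri2 xT2)).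
  by rewrite -degE (card_setD1 card1) // (card_setD1 card2) //; have := max_deg_le3 x; lia.
rewrite !inE => /andP [/andP [zx zT1] /andP [_ zT2]].
have share : tri_edges T1 :&: tri_edges T2 != set0.
  by apply: (meet_tri_edges2 tri1 (_ : x != z)); rewrite ?inE ?xT1 ?xT2 ?zT1 ?zT2 // eq_sym.
have [nshare0 _ _] := low_vertex_counts; move: (nshare0 T1); rewrite inE => /(_ tri1) /eqP.
by rewrite cards_eq0 => /eqP /setP /(_ T2); rewrite !inE tri2 eq_sym T12 share.
Qed.

End Necessity.

Theorem theorem6 (G : sgraph) :
  connected G ->
  (isomorphic (C3 (line_graph G)) G <->
   [/\ (forall x : svert G, deg x = 2 \/ deg x = 3),
       (forall x : svert G, deg x = 2 -> exists t : {set svert G}, is_triangle t /\ x \in t),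
       (forall t : {set svert G}, is_triangle t -> #|[set x in t | deg x == 2]| = 1) &
       (forall t1 t2 : {set svert G}, is_triangle t1 -> is_triangle t2 -> t1 != t2 ->
          t1 :&: t2 = set0)]).
Proof.
move=> _; split=> [[f [f_bij f_adj]] | [deg23 deg2_tri tri_deg2 tri_disj]].
  split; [exact: deg2_or_3 f_bij f_adj | exact: deg2_triangle f_bij f_adj
         | exact: triangle_deg2_card f_bij f_adj | exact: triangles_disjoint f_bij f_adj].
exact: C3_line_graph_iso deg23 deg2_tri tri_deg2 tri_disj.
Qed.
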